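(* Let $S_u\subseteq[p]$, $S_v\subseteq[q]$ with $|S_u|=s_u$, $|S_v|=s_v$, let $B^\star\in\mathbb R^{p\times q}$ have all nonzero entries in $S_u\times S_v$, assume $n>s_us_v$, $\lambda>0$, and $\sigma_{\min}((\widehat\Sigma_X)_{S_uS_u})>0$, $\sigma_{\min}((\widehat\Sigma_Y)_{S_vS_v})>0$. Let $\tilde B\in\mathbb R^{s_u\times s_v}$ be a minimizer of $$\tfrac12\Big\|\tfrac1nX_{S_u}BY_{S_v}^\top-I_n\Big\|_F^2+\lambda\sum_{i,j}|B_{ij}|$$ and $\tilde\Delta=\tilde B-B^\star_{S_uS_v}$. Then $$\|\tilde\Delta\|_F\le\frac{2\big(\|\widehat\Sigma_{XY}-\widehat\Sigma_XB^\star\widehat\Sigma_Y\|_\infty+\lambda\big)}{\sigma_{\min}((\widehat\Sigma_X)_{S_uS_u})\,\sigma_{\min}((\widehat\Sigma_Y)_{S_vS_v})}\sqrt{s_us_v}.$$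
   Context: $X\in\mathbb R^{n\times p}$, $Y\in\mathbb R^{n\times q}$ are data matrices; $X_{S_u}$ (resp. $Y_{S_v}$) is the submatrix of columns indexed by $S_u$ (resp. $S_v$). $\widehat\Sigma_X=X^\top X/n$, $\widehat\Sigma_Y=Y^\top Y/n$, $\widehat\Sigma_{XY}=X^\top Y/n$. $A_{S_1S_2}$ is the submatrix with rows in $S_1$ and columns in $S_2$; $\|A\|_\infty=\max_{ij}|A_{ij}|$; $\sigma_{\min}$ is the smallest singular value. *)

From HB Require Import structures.
From mathcomp Require Import all_boot all_order all_algebra.
Set Implicit Arguments. Unset Strict Implicit. Unset Printing Implicit Defensive.
Import Order.TTheory GRing.Theory Num.Theory.
Local Open Scope ring_scope.

(* Columns of A indexed by S (in increasing order of indices, via enum_val). *)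
Definition subcols (R : Type) (m p : nat) (S : {set 'I_p}) (A : 'M[R]_(m, p))
  : 'M[R]_(m, #|S|) := \matrix_(i < m, k < #|S|) A i (enum_val k).

Definition submat (R : Type) (p q : nat) (S1 : {set 'I_p}) (S2 : {set 'I_q})
  (A : 'M[R]_(p, q)) : 'M[R]_(#|S1|, #|S2|) :=
  \matrix_(k < #|S1|, l < #|S2|) A (enum_val k) (enum_val l).

Definition frob2 (R : rcfType) (m n : nat) (A : 'M[R]_(m, n)) : R :=
  \sum_(i < m) \sum_(j < n) A i j ^+ 2.
Definition frob (R : rcfType) (m n : nat) (A : 'M[R]_(m, n)) : R :=
  Num.sqrt (frob2 A).

Definition l1norm (R : rcfType) (m n : nat) (A : 'M[R]_(m, n)) : R :=
  \sum_(i < m) \sum_(j < n) `|A i j|.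

Definition maxnorm (R : rcfType) (m n : nat) (A : 'M[R]_(m, n)) : R :=
  \big[Num.max/0]_(i < m) \big[Num.max/0]_(j < n) `|A i j|.

(* s is the smallest singular value of the square matrix A: the singular values
   of A are the square roots of the eigenvalues of A^T A, and s is the
   smallest of them. *)
Definition is_sigma_min (R : rcfType) (k : nat) (A : 'M[R]_k) (s : R) : Prop :=
  [/\ 0 <= s, eigenvalue (A^T *m A) (s ^+ 2)
    & forall a, eigenvalue (A^T *m A) a -> s ^+ 2 <= a].

Arguments subcols {R m p} S A.
Arguments submat {R p q} S1 S2 A.
Arguments frob2 {R m n} A.
Arguments frob {R m n} A.
Arguments l1norm {R m n} A.
Arguments maxnorm {R m n} A.
Arguments is_sigma_min {R k} A s.

From HB Require Import structures.
From mathcomp Require Import all_boot all_order all_algebra.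
From mathcomp Require Import spectral sesquilinear complex.
From mathcomp Require Import ring lra.
Import Order.TTheory GRing.Theory Num.Theory.
Set Implicit Arguments. Unset Strict Implicit. Unset Printing Implicit Defensive.
Local Open Scope ring_scope.

(* Compare the objective at [Btilde] with its value at [B0], the restriction of
   [Bstar].  Expanding the quadratic part around [B0] and using that [Bstar] is
   supported on [Su x Sv], its gradient there is the restriction of
   [SigX Bstar SigY - SigXY]; with [D = Btilde - B0] this gives
     1/2 ||n^-1 X_Su D Y_Sv^T||_F^2 <= (||SigXY - SigX Bstar SigY||_inf + lambda) ||D||_1.
   The restricted Gram matrices have all eigenvalues at least [sigX], [sigY], so
   the left side is at least [sigX sigY ||D||_F^2 / 2], while Cauchy-Schwarz gives
   ||D||_1 <= sqrt(su sv) ||D||_F; dividing by ||D||_F concludes. *)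

Section Selection.
Variable R : comPzRingType.

Definition selmx p (S : {set 'I_p}) : 'M[R]_(#|S|, p) :=
  \matrix_(k, i) (enum_val k == i)%:R.

Lemma sum_selmx p (S : {set 'I_p}) (k : 'I_#|S|) (F : 'I_p -> R) :
  \sum_i F i *+ (enum_val k == i) = F (enum_val k).
Proof.
rewrite (bigD1 (enum_val k)) //= eqxx big1 ?addr0 // => i /negbTE ki.
by rewrite eq_sym ki.
Qed.

Lemma subcolsE m p (S : {set 'I_p}) (X : 'M[R]_(m, p)) :
  subcols S X = X *m (selmx S)^T.
Proof.
apply/matrixP => i k; rewrite !mxE -(sum_selmx k (X i)).
by apply: eq_bigr => j _; rewrite !mxE mulr_natr.
Qed.

Lemma submatE p q (S1 : {set 'I_p}) (S2 : {set 'I_q}) (Z : 'M[R]_(p, q)) :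
  submat S1 S2 Z = selmx S1 *m Z *m (selmx S2)^T.
Proof.
apply/matrixP => k l; rewrite !mxE -(sum_selmx l (Z (enum_val k))).
apply: eq_bigr => j _; rewrite !mxE mulr_natr -(sum_selmx k (Z^~ j)).
by congr (_ *+ _); apply: eq_bigr => i _; rewrite !mxE mulr_natl.
Qed.

Lemma trmx_selmx_mul p (S : {set 'I_p}) :
  (selmx S)^T *m selmx S = diag_mx (\row_i (i \in S)%:R).
Proof.
apply/matrixP => i j; rewrite !mxE.
under eq_bigr do rewrite !mxE.
rewrite -(big_enum_val (fun x => (x == i)%:R * (x == j)%:R)) /=.
have [iS|iNS] := boolP (i \in S).
  rewrite (bigD1 i) //= eqxx mul1r big1 ?addr0 // => k /andP[_ /negbTE ->].
  by rewrite mul0r.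
rewrite mul0rn big1 // => k kS; have /negbTE -> : k != i.
  by apply: contraNneq iNS => <-.
by rewrite mul0r.
Qed.

Lemma selmx_supportK p q (S1 : {set 'I_p}) (S2 : {set 'I_q}) (B : 'M[R]_(p, q)) :
  (forall i j, B i j != 0 -> (i \in S1) && (j \in S2)) ->
  (selmx S1)^T *m submat S1 S2 B *m selmx S2 = B.
Proof.
move=> suppB; rewrite submatE !mulmxA trmx_selmx_mul -mulmxA trmx_selmx_mul.
apply/matrixP => i j; rewrite mul_mx_diag mul_diag_mx !mxE.
have [->|/suppB/andP[-> ->]] := eqVneq (B i j) 0; first by rewrite mulr0 mul0r.
by rewrite mul1r mulr1.
Qed.

Lemma submat_mulmx3 p1 p2 p3 p4 (S1 : {set 'I_p1}) (S2 : {set 'I_p2})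
    (S3 : {set 'I_p3}) (S4 : {set 'I_p4}) A (B : 'M[R]_(p2, p3)) (C : 'M[R]_(p3, p4)) :
  (forall i j, B i j != 0 -> (i \in S2) && (j \in S3)) ->
  submat S1 S4 (A *m B *m C) =
    submat S1 S2 A *m submat S2 S3 B *m submat S3 S4 C.
Proof.
by move=> suppB; rewrite -{1}(selmx_supportK suppB) !submatE !mulmxA.
Qed.

Lemma submat_scale_mulmx m p q (S1 : {set 'I_p}) (S2 : {set 'I_q}) (c : R)
    (X : 'M[R]_(m, p)) (Y : 'M[R]_(m, q)) :
  submat S1 S2 (c *: (X^T *m Y)) = c *: ((subcols S1 X)^T *m subcols S2 Y).
Proof. by rewrite submatE !subcolsE trmx_mul trmxK -scalemxAr -scalemxAl !mulmxA. Qed.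

Lemma submatB p q (S1 : {set 'I_p}) (S2 : {set 'I_q}) (Z W : 'M[R]_(p, q)) :
  submat S1 S2 (Z - W) = submat S1 S2 Z - submat S1 S2 W.
Proof. by apply/matrixP => k l; rewrite !mxE. Qed.

End Selection.

Section EntrywiseNorms.
Variable R : rcfType.

Lemma mxtrace_mul_tr m n (U V : 'M[R]_(m, n)) :
  \tr (U *m V^T) = \sum_i \sum_j U i j * V i j.
Proof. by apply: eq_bigr => i _; rewrite !mxE; apply: eq_bigr => j _; rewrite mxE. Qed.

Lemma frob2_tr m n (U : 'M[R]_(m, n)) : frob2 U = \tr (U *m U^T).
Proof. by rewrite mxtrace_mul_tr; do 2!apply: eq_bigr => ? _; rewrite expr2. Qed.

Lemma frob2_ge0 m n (U : 'M[R]_(m, n)) : 0 <= frob2 U.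
Proof. by do 2!apply: sumr_ge0 => ? _; rewrite sqr_ge0. Qed.

Lemma sqr_frob m n (U : 'M[R]_(m, n)) : frob U ^+ 2 = frob2 U.
Proof. by rewrite sqr_sqrtr // frob2_ge0. Qed.

Lemma frob2_gt0 m n (U : 'M[R]_(m, n)) : U != 0 -> 0 < frob2 U.
Proof.
move=> U_neq0; rewrite lt_def frob2_ge0 andbT; apply: contra U_neq0 => /eqP U0.
apply/eqP/matrixP => i j; rewrite mxE; apply/eqP; rewrite -sqrf_eq0; apply/eqP.
have rows0 := psumr_eq0P (fun i _ => sumr_ge0 _ (fun j _ => sqr_ge0 (U i j))) U0.
exact: psumr_eq0P (fun j _ => sqr_ge0 (U i j)) (rows0 i isT) j isT.
Qed.

Lemma frob2D m n (U V : 'M[R]_(m, n)) :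
  frob2 (U + V) = frob2 U + 2 * \tr (U *m V^T) + frob2 V.
Proof.
rewrite !frob2_tr linearD /= mulmxDl !mulmxDr !mxtraceD.
rewrite -[\tr (V *m U^T)]mxtrace_tr trmx_mul trmxK; ring.
Qed.

Lemma sqr_sum_le (I : finType) (f : I -> R) :
  (\sum_i f i) ^+ 2 <= #|I|%:R * \sum_i f i ^+ 2.
Proof.
have AMGM i j : 2 * (f i * f j) <= f i ^+ 2 + f j ^+ 2.
  by have := sqr_ge0 (f i - f j); rewrite sqrrB; lra.
have sum2 : \sum_i \sum_j (f i ^+ 2 + f j ^+ 2) = 2 * (#|I|%:R * \sum_i f i ^+ 2).
  under eq_bigr do rewrite big_split /= sumr_const -mulr_natl.
  rewrite big_split /= sumr_const -mulr_natl -mulr_sumr; ring.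
rewrite -(@ler_pM2l _ 2) // -sum2 expr2 mulr_suml mulr_sumr; apply: ler_sum => i _.
by rewrite mulr_sumr mulr_sumr; apply: ler_sum => j _.
Qed.

Lemma l1norm_ge0 m n (U : 'M[R]_(m, n)) : 0 <= l1norm U.
Proof. by do 2!apply: sumr_ge0 => ? _. Qed.

Lemma l1norm_le_frob m n (U : 'M[R]_(m, n)) :
  l1norm U <= Num.sqrt ((m * n)%:R) * frob U.
Proof.
have sqr_l1 : l1norm U ^+ 2 <= (m * n)%:R * frob2 U.
  rewrite /l1norm /frob2 !pair_bigA /=.
  have := sqr_sum_le (fun ij : 'I_m * 'I_n => `|U ij.1 ij.2|).
  rewrite card_prod !card_ord natrM [X in _ * X](eq_bigr (fun ij => U ij.1 ij.2 ^+ 2)) //.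
  by move=> ij _; rewrite real_normK ?num_real.
rewrite /frob -sqrtrM // -(ger0_norm (l1norm_ge0 U)) -sqrtr_sqr.
by rewrite ler_sqrt // mulr_ge0 ?frob2_ge0.
Qed.

Lemma lerB_l1norm m n (U V : 'M[R]_(m, n)) : l1norm U - l1norm V <= l1norm (V - U).
Proof.
rewrite /l1norm -sumrB; apply: ler_sum => i _; rewrite -sumrB.
by apply: ler_sum => j _; rewrite !mxE distrC lerB_dist.
Qed.

Lemma maxnorm_ge0 m n (U : 'M[R]_(m, n)) : 0 <= maxnorm U.
Proof. exact: bigmax_ge_id. Qed.

Lemma maxnorm_ge m n (U : 'M[R]_(m, n)) i j : `|U i j| <= maxnorm U.
Proof.
apply: le_trans (le_bigmax _ (fun i => \big[Num.max/0]_j `|U i j|) i).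
exact: le_bigmax.
Qed.

Lemma maxnorm_submat_le p q (S1 : {set 'I_p}) (S2 : {set 'I_q}) (Z : 'M[R]_(p, q)) :
  maxnorm (submat S1 S2 Z) <= maxnorm Z.
Proof.
apply: bigmax_le (maxnorm_ge0 Z) _ => k _; apply: bigmax_le (maxnorm_ge0 Z) _ => l _.
by rewrite mxE maxnorm_ge.
Qed.

Lemma norm_mxtrace_mul_le m n (G U : 'M[R]_(m, n)) :
  `|\tr (G *m U^T)| <= maxnorm G * l1norm U.
Proof.
rewrite mxtrace_mul_tr /l1norm mulr_sumr.
apply: le_trans (ler_norm_sum _ _ _) _; apply: ler_sum => i _; rewrite mulr_sumr.
apply: le_trans (ler_norm_sum _ _ _) _; apply: ler_sum => j _.
by rewrite normrM ler_wpM2r ?maxnorm_ge.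
Qed.

End EntrywiseNorms.

Section RayleighBound.
Local Open Scope sesquilinear_scope.
Variable R : rcfType.
Local Notation toC := (real_complex R).

Lemma eigenvalue_map_real_complex k (S : 'M[R]_k) (r : R) :
  eigenvalue (map_mx toC S) (toC r) -> eigenvalue S r.
Proof. by rewrite !eigenvalue_root_char -map_char_poly fmorph_root. Qed.

Lemma conj_real_complex (x : R) : (toC x)^* = toC x.
Proof. by apply/eqP; rewrite -CrealE; apply/complex_realP; exists x. Qed.

Lemma diag_form_ge k (d : 'rV[R[i]]_k) (c : R) (y : 'rV[R[i]]_k) :
  (forall i, toC c <= d 0 i) ->
  toC c * (y *m y^t*) 0 0 <= (y *m diag_mx d *m y^t*) 0 0.
Proof.
move=> d_ge; rewrite mul_mx_diag !mxE mulr_sumr; apply: ler_sum => i _.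
rewrite !mxE mulrA [_ * d 0 i]mulrC -!mulrA.
by apply: ler_wpM2r; [exact: mul_conjC_ge0 | exact: d_ge].
Qed.

(* Spectral theorem for the complexification of [S]: a unitary change of basis
   diagonalizes it, with real diagonal entries that are eigenvalues of [S]. *)
Lemma quad_form_ge k (S : 'M[R]_k) (c : R) :
  S^T = S -> (forall a, eigenvalue S a -> c <= a) ->
  forall x : 'rV[R]_k, c * (x *m x^T) 0 0 <= (x *m S *m x^T) 0 0.
Proof.
move=> Ssym S_ge x.
pose SC := map_mx toC S.
have SC_real : SC \is a mxOver Num.real.
  by apply/mxOverP => i j; rewrite mxE; apply/complex_realP; eexists.
have SC_sym : SC \is symmetricmx.
  by apply/is_hermitianmxP; rewrite expr0 scale1r map_trmx Ssym map_mx_id.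
have /orthomx_spectralP SCE := symmetric_normalmx SC_sym SC_real.
set P := spectralmx SC in SCE; set d := spectral_diag SC in SCE.
have P_unitary : P \is unitarymx := spectral_unitarymx SC.
have PPt : P *m P^t* = 1%:M by apply/unitarymxP.
have PtP : P^t* *m P = 1%:M by rewrite -invmx_unitary // mulVmx ?spectral_unit.
have d_ge i : toC c <= d 0 i.
  have /complex_realP [r dr] : d 0 i \is Num.real.
    have := hermitian_spectral_diag_real (realsym_hermsym SC_sym SC_real).
    by move/mxOverP; apply.
  rewrite dr lecR; apply/S_ge/eigenvalue_map_real_complex; rewrite -/SC -dr.
  apply/eigenvalueP; exists (row i P).
    rewrite -row_mul.
    have -> : P *m SC = diag_mx d *m P by rewrite {1}SCE !mulmxA mulmxV ?spectral_unit // mul1mx.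
    by rewrite mul_diag_mx; apply/rowP => j; rewrite !mxE.
  apply/negP => /eqP Pi0.
  have /rowP/(_ i) := congr1 (row i) PPt; rewrite row_mul Pi0 mul0mx !mxE eqxx.
  by move/eqP; rewrite eq_sym oner_eq0.
pose xC := map_mx toC x.
have xCt : xC^t* = map_mx toC x^T.
  by apply/matrixP => i j; rewrite !mxE conj_real_complex.
pose y := xC *m P^t*.
have yt : y^t* = P *m xC^t* by rewrite trmx_mul map_mxM trmxCK.
have := diag_form_ge y d_ge.
have -> : y *m diag_mx d *m y^t* = xC *m SC *m xC^t*.
  by rewrite yt SCE invmx_unitary // !mulmxA.
have -> : y *m y^t* = xC *m xC^t* by rewrite yt !mulmxA -(mulmxA xC) PtP mulmx1.
by rewrite xCt -!map_mxM !mxE -rmorphM lecR.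
Qed.

End RayleighBound.

Section GramMatrices.
Variable R : rcfType.

Lemma gram_eigenvalue_ge0 m k (A : 'M[R]_(m, k)) (c a : R) :
  0 <= c -> eigenvalue (c *: (A^T *m A)) a -> 0 <= a.
Proof.
move=> c_ge0 /eigenvalueP[v vM v_neq0].
have : a * frob2 v = c * frob2 (v *m A^T).
  rewrite !frob2_tr -mxtraceZ scalemxAl -vM -scalemxAr -scalemxAl mxtraceZ.
  by rewrite trmx_mul trmxK !mulmxA.
by move/eqP; rewrite -(pmulr_lge0 _ (frob2_gt0 v_neq0)) => /eqP->; rewrite mulr_ge0 ?frob2_ge0.
Qed.

Lemma gram_eigenvalue_ge m k (A : 'M[R]_(m, k)) (c s a : R) :
  0 <= c -> is_sigma_min (c *: (A^T *m A)) s ->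
  eigenvalue (c *: (A^T *m A)) a -> s <= a.
Proof.
move=> c_ge0 [s_ge0 _ s_min] Ma; set M := c *: (A^T *m A) in s_min Ma.
have M_sym : M^T = M by rewrite /M linearZ /= trmx_mul trmxK.
have M2a2 : eigenvalue (M^T *m M) (a ^+ 2).
  case/eigenvalueP: Ma => v vM v_neq0; apply/eigenvalueP; exists v => //.
  by rewrite M_sym mulmxA vM -scalemxAl vM scalerA.
by rewrite -ler_sqr ?nnegrE ?s_min // (gram_eigenvalue_ge0 c_ge0 Ma).
Qed.

Lemma mxtrace_quad_ge k (S : 'M[R]_k) (c : R) :
  S^T = S -> (forall a, eigenvalue S a -> c <= a) ->
  forall m (Z : 'M[R]_(m, k)), c * \tr (Z *m Z^T) <= \tr (Z *m S *m Z^T).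
Proof.
move=> S_sym S_ge m Z; rewrite /mxtrace mulr_sumr; apply: ler_sum => i _.
have row_quad (W : 'M[R]_(m, k)) : (row i W *m (row i Z)^T) 0 0 = (W *m Z^T) i i.
  by rewrite !mxE; apply: eq_bigr => j _; rewrite !mxE.
by have := quad_form_ge S_sym S_ge (row i Z); rewrite -[row i Z *m S]row_mul !row_quad.
Qed.

Lemma frob2_scale_mulmx3_ge n a b (c sA sC : R) (A : 'M[R]_(n, a))
    (C : 'M[R]_(n, b)) (D : 'M[R]_(a, b)) :
  0 <= c -> 0 <= sA ->
  (forall e, eigenvalue (c *: (A^T *m A)) e -> sA <= e) ->
  (forall e, eigenvalue (c *: (C^T *m C)) e -> sC <= e) ->
  sA * sC * frob2 D <= frob2 (c *: (A *m D *m C^T)).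
Proof.
move=> c_ge0 sA_ge0 A_ge C_ge.
have gram_sym m k (W : 'M[R]_(m, k)) : (c *: (W^T *m W))^T = c *: (W^T *m W).
  by rewrite linearZ /= trmx_mul trmxK.
have quadA := mxtrace_quad_ge (gram_sym _ _ A) A_ge (C *m D^T).
have quadC := mxtrace_quad_ge (gram_sym _ _ C) C_ge D.
have -> : frob2 (c *: (A *m D *m C^T)) =
          c * \tr (C *m D^T *m (c *: (A^T *m A)) *m (C *m D^T)^T).
  rewrite frob2_tr !linearZ /= -!scalemxAl !mxtraceZ mxtrace_mulC.
  by rewrite !trmx_mul !trmxK !mulmxA.
have gramC : c * \tr (C *m D^T *m (C *m D^T)^T) = \tr (D *m (c *: (C^T *m C)) *m D^T).
  rewrite -scalemxAr -scalemxAl mxtraceZ mxtrace_mulC.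
  by rewrite !trmx_mul !trmxK !mulmxA.
apply: le_trans (ler_wpM2l c_ge0 quadA).
rewrite mulrCA gramC; apply: le_trans (ler_wpM2l sA_ge0 quadC).
by rewrite frob2_tr mulrA.
Qed.

End GramMatrices.

Lemma le_div_of_mul_sqr_le (R : realFieldType) (k x y : R) :
  0 < k -> 0 <= x -> 0 <= y -> k * x ^+ 2 <= y * x -> x <= y / k.
Proof.
move=> k_gt0 x_ge0 y_ge0 kxy; rewrite ler_pdivlMr //.
have [->|x_neq0] := eqVneq x 0; first by rewrite mul0r.
have x_gt0 : 0 < x by rewrite lt_def x_neq0.
rewrite -(ler_pM2l x_gt0); nra.
Qed.

Section LassoErrorBound.
Variables (R : rcfType) (n a b : nat) (c lambda : R).
Variables (A : 'M[R]_(n, a)) (C : 'M[R]_(n, b)).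

Definition lasso_obj (B : 'M[R]_(a, b)) : R :=
  2^-1 * frob2 (c *: (A *m B *m C^T) - 1%:M) + lambda * l1norm B.

Local Notation M := (c *: (A^T *m A)).
Local Notation N := (c *: (C^T *m C)).

Lemma mxtrace_residual_mul (B0 D : 'M[R]_(a, b)) :
  \tr ((c *: (A *m B0 *m C^T) - 1%:M) *m (c *: (A *m D *m C^T))^T) =
  \tr ((M *m B0 *m N - c *: (A^T *m C)) *m D^T).
Proof.
rewrite !mulmxBl mul1mx !linearB /=; congr (_ - _).
  rewrite linearZ /= -!scalemxAl -!scalemxAr -!scalemxAl !scalerA !mxtraceZ.
  congr (_ * _); rewrite !trmx_mul !trmxK !mulmxA.
  by rewrite [LHS]mxtrace_mulC !mulmxA.
rewrite linearZ -!scalemxAl !mxtraceZ; congr (_ * _).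
rewrite [LHS]mxtrace_tr -mulmxA [LHS]mxtrace_mulC -[RHS]mxtrace_tr.
by rewrite !trmx_mul !trmxK !mulmxA.
Qed.

Lemma lasso_basic_ineq (B0 B : 'M[R]_(a, b)) :
  lasso_obj B <= lasso_obj B0 ->
  2^-1 * frob2 (c *: (A *m (B - B0) *m C^T)) <=
    \tr ((c *: (A^T *m C) - M *m B0 *m N) *m (B - B0)^T)
    + lambda * (l1norm B0 - l1norm B).
Proof.
have split_res : c *: (A *m B *m C^T) - 1%:M =
    (c *: (A *m B0 *m C^T) - 1%:M) + c *: (A *m (B - B0) *m C^T).
  by rewrite mulmxBr mulmxBl scalerBr addrCA addrAC subrr add0r.
rewrite /lasso_obj split_res frob2D mxtrace_residual_mul.
rewrite -[c *: (A^T *m C) - _]opprB mulNmx linearN /=.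
lra.
Qed.

Lemma lasso_error_bound (sA sC g : R) (B0 B : 'M[R]_(a, b)) :
  0 <= c -> 0 <= lambda -> 0 < sA -> 0 < sC ->
  (forall e, eigenvalue M e -> sA <= e) ->
  (forall e, eigenvalue N e -> sC <= e) ->
  maxnorm (c *: (A^T *m C) - M *m B0 *m N) <= g ->
  lasso_obj B <= lasso_obj B0 ->
  frob (B - B0) <= 2 * (g + lambda) / (sA * sC) * Num.sqrt ((a * b)%:R).
Proof.
move=> c_ge0 lambda_ge0 sA_gt0 sC_gt0 M_ge N_ge G_le opt.
have basic := lasso_basic_ineq opt.
have penalty := ler_wpM2l lambda_ge0 (lerB_l1norm B0 B).
set D := B - B0 in basic penalty *.
set G := c *: (A^T *m C) - M *m B0 *m N in G_le basic.
have curv := frob2_scale_mulmx3_ge D c_ge0 (ltW sA_gt0) M_ge N_ge.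
have cross : \tr (G *m D^T) <= g * l1norm D.
  apply: le_trans (ler_norm _) (le_trans (norm_mxtrace_mul_le G D) _).
  by rewrite ler_wpM2r ?l1norm_ge0.
have cone : sA * sC * frob2 D <= 2 * (g + lambda) * l1norm D by lra.
have K_ge0 : 0 <= 2 * (g + lambda).
  by rewrite mulr_ge0 ?addr_ge0 ?(le_trans (maxnorm_ge0 G) G_le).
rewrite mulrAC; apply: le_div_of_mul_sqr_le.
- exact: mulr_gt0.
- exact: sqrtr_ge0.
- by rewrite mulr_ge0 ?sqrtr_ge0.
rewrite sqr_frob (le_trans cone) // -[_ * frob D]mulrA.
exact: ler_wpM2l (l1norm_le_frob D).
Qed.

End LassoErrorBound.

Unset Implicit Arguments.

Theorem mainTheorem7 (R : rcfType) (n p q : nat)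
  (X : 'M[R]_(n, p)) (Y : 'M[R]_(n, q))
  (Su : {set 'I_p}) (Sv : {set 'I_q})
  (Bstar : 'M[R]_(p, q)) (lambda sigX sigY : R)
  (Btilde : 'M[R]_(#|Su|, #|Sv|)) :
  let SigX := n%:R^-1 *: (X^T *m X) in
  let SigY := n%:R^-1 *: (Y^T *m Y) in
  let SigXY := n%:R^-1 *: (X^T *m Y) in
  let obj (B : 'M[R]_(#|Su|, #|Sv|)) :=
    2^-1 * frob2 (n%:R^-1 *: (subcols Su X *m B *m (subcols Sv Y)^T) - 1%:M)
    + lambda * l1norm B in
  (forall i j, Bstar i j != 0 -> (i \in Su) && (j \in Sv)) ->
  (#|Su| * #|Sv| < n)%N ->
  0 < lambda ->
  is_sigma_min (submat Su Su SigX) sigX -> 0 < sigX ->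
  is_sigma_min (submat Sv Sv SigY) sigY -> 0 < sigY ->
  (forall B, obj Btilde <= obj B) ->
  frob (Btilde - submat Su Sv Bstar)
    <= 2 * (maxnorm (SigXY - SigX *m Bstar *m SigY) + lambda) / (sigX * sigY)
       * Num.sqrt ((#|Su| * #|Sv|)%:R).
Proof.
move=> SigX SigY SigXY obj suppB _ lambda_gt0 minX sigX_gt0 minY sigY_gt0 opt.
rewrite submat_scale_mulmx in minX; rewrite submat_scale_mulmx in minY.
have c_ge0 : 0 <= n%:R^-1 :> R by rewrite invr_ge0 ler0n.
apply: (lasso_error_bound (c := n%:R^-1) (A := subcols Su X) (C := subcols Sv Y))
  (opt _) => //.
- exact: ltW.
- by move=> e; apply: gram_eigenvalue_ge minX.
- by move=> e; apply: gram_eigenvalue_ge minY.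
rewrite -!submat_scale_mulmx -submat_mulmx3 // -submatB.
exact: maxnorm_submat_le.
Qed.
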